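(* Let $p$ be a prime, $n$ a positive integer, and for $j=0,\dots,p-1$ let $f_j:\mathbb{F}_p^n\to\mathbb{F}_p$ be functions. Define $F:\mathbb{F}_p^{n+2}=\mathbb{F}_p^n\times\mathbb{F}_p\times\mathbb{F}_p\to\mathbb{F}_p$ by \[F(x,x_{n+1},y)=f_y(x)+x_{n+1}y,\] where $f_y$ denotes $f_j$ for $j$ the element $y\in\mathbb{F}_p=\{0,\dots,p-1\}$. Then $F$ is bent if and only if $f_j$ is bent for every $0\le j\le p-1$.
   Context: On $\mathbb{F}_p^N$ use the standard dot product. Walsh transform: $\widehat f(b)=\sum_{x\in\mathbb{F}_p^N}\epsilon_p^{f(x)-b\cdot x}$, $\epsilon_p=e^{2\pi i/p}$; $f$ is bent if $|\widehat f(b)|=p^{N/2}$ for all $b\in\mathbb{F}_p^N$. *)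

From mathcomp Require Import all_boot all_order all_algebra all_field.
Set Implicit Arguments. Unset Strict Implicit. Unset Printing Implicit Defensive.
Import Order.TTheory GRing.Theory Num.Theory.
Local Open Scope ring_scope.

Definition dotp (p N : nat) (x b : 'rV['F_p]_N) : 'F_p := \sum_(i < N) x 0 i * b 0 i.

(* eps_p = e^{2 pi i / p}: p.-root (-1) is the p-th root of -1 of minimal
   nonnegative argument, i.e. e^{i pi / p}; its square is e^{2 pi i / p}. *)
Definition eps (p : nat) : algC := (p.-root (-1)) ^+ 2.

(* Walsh transform: \hat f(b) = sum_x eps_p^{f(x) - b.x}; the exponent is an
   element of F_p = {0,...,p-1}, used via its natural-number representative. *)
Definition walsh (p N : nat) (f : 'rV['F_p]_N -> 'F_p) (b : 'rV['F_p]_N) : algC :=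
  \sum_(x : 'rV['F_p]_N) eps p ^+ (nat_of_ord (f x - dotp b x)).

Definition bent (p N : nat) (f : 'rV['F_p]_N -> 'F_p) : Prop :=
  forall b : 'rV['F_p]_N, `|walsh f b| = sqrtC ((p%:R : algC) ^+ N).

From mathcomp Require Import all_boot all_order all_algebra all_field.
From mathcomp Require Import ring.
Set Implicit Arguments. Unset Strict Implicit. Unset Printing Implicit Defensive.
Import Order.TTheory GRing.Theory Num.Theory.
Local Open Scope ring_scope.

(* Writing b = (b', c, d), the Walsh transform of F factors: the sum over
   x_{n+1} of eps^{x_{n+1} (y - c)} vanishes unless y = c, where it equals p,
   so that F^(b', c, d) = p eps^{-cd} f_c^(b').  Hence |F^(b', c, d)| =
   p |f_c^(b')| and p^{(n+2)/2} = p p^{n/2}. *)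

Section AdditiveCharacter.
Variable p : nat.
Hypothesis p_pr : prime p.

Lemma eps_expr_p : eps p ^+ p = 1.
Proof. by rewrite /eps -exprM mulnC exprM rootCK ?prime_gt0 // sqrrN expr1n. Qed.

Lemma eps_neq1 : eps p != 1.
Proof.
rewrite /eps sqrf_eq1 negb_or rootC_eq1 ?prime_gt0 //.
rewrite (lt_eqF (lt_trans (ltrN10 _) ltr01)) /=.
by apply/eqP => r_eqN1; have := rootC_lt0 (-1 : algC) (prime_gt1 p_pr);
  rewrite r_eqN1 ltrN10.
Qed.

Lemma eps_prim_root : p.-primitive_root (eps p).
Proof.
have [m m_prim m_dvd_p] := prim_order_exists (prime_gt0 p_pr) eps_expr_p.
case/primeP: p_pr => _ /(_ m m_dvd_p) /orP[/eqP m1 | /eqP m_eq_p]; last first.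
  by rewrite m_eq_p in m_prim.
by have := prim_expr_order m_prim; rewrite m1 expr1 => /eqP; rewrite (negbTE eps_neq1).
Qed.

Definition addchar (t : 'F_p) : algC := eps p ^+ (nat_of_ord t).

Lemma walshE N (f : 'rV['F_p]_N -> 'F_p) b :
  walsh f b = \sum_x addchar (f x - dotp b x).
Proof. by []. Qed.

Lemma addchar0 : addchar 0 = 1.
Proof. exact: expr0. Qed.

(* [a + b : 'F_p] is computed modulo [(Zp_trunc (pdiv p)).+2], which is [p]. *)
Lemma addcharD a b : addchar (a + b) = addchar a * addchar b.
Proof.
have eps_expr_mod : eps p ^+ (Zp_trunc (pdiv p)).+2 = 1 by rewrite Fp_cast // eps_expr_p.
by rewrite /addchar -exprD -[RHS](expr_mod _ eps_expr_mod).
Qed.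

Lemma addchar_eq1 t : (addchar t == 1) = (t == 0).
Proof.
rewrite /addchar -(prim_order_dvd eps_prim_root).
have t_lt_p : (nat_of_ord t < p)%N by rewrite -[p in (_ < p)%N](Fp_cast p_pr).
apply/idP/eqP => [p_dvd_t | ->]; last exact: dvdn0.
apply/val_inj/eqP; apply: contraTT p_dvd_t; rewrite -lt0n => t_gt0.
by apply/negP => /(dvdn_leq t_gt0); rewrite leqNgt t_lt_p.
Qed.

Lemma norm_addchar t : `|addchar t| = 1.
Proof.
have norm_eps : `|eps p| = 1.
  by apply/eqP; rewrite -(pexpr_eq1 (prime_gt0 p_pr)) // -normrX eps_expr_p normr1.
by rewrite normrX norm_eps expr1n.
Qed.

Lemma sum_addcharM t : \sum_(s : 'F_p) addchar (s * t) = if t == 0 then p%:R else 0.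
Proof.
have [->|t_neq0] := eqVneq t 0.
  by under eq_bigr do rewrite mulr0 addchar0; rewrite sumr_const card_Fp.
set S := \sum_s _.
have shift_S : addchar t * S = S.
  rewrite mulr_sumr /S [RHS](reindex_inj (addIr 1)).
  by apply: eq_bigr => s _; rewrite mulrDl mul1r addcharD mulrC.
have : (addchar t - 1) * S == 0 by rewrite mulrBl shift_S mul1r subrr.
by rewrite mulf_eq0 subr_eq0 addchar_eq1 (negbTE t_neq0) => /eqP.
Qed.

End AdditiveCharacter.

Section RowSums.
Variables (T : finType) (V : nmodType).

Lemma sum_row_mx m k (g : 'rV[T]_(m + k) -> V) :
  \sum_z g z = \sum_(r : 'rV[T]_k) \sum_(x : 'rV[T]_m) g (row_mx x r).
Proof.
rewrite pair_big /= (reindex (fun u : 'rV[T]_k * 'rV[T]_m => row_mx u.2 u.1)) //=.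
exists (fun z => (rsubmx z, lsubmx z)) => [[r x] _ | z _] /=.
  by rewrite row_mxKl row_mxKr.
by rewrite hsubmxK.
Qed.

Definition row2 (a b : T) : 'rV[T]_2 := \row_(i < 2) if i == 0 :> nat then a else b.

Lemma row2_0 a b : row2 a b 0 0 = a. Proof. by rewrite mxE. Qed.
Lemma row2_1 a b : row2 a b 0 1 = b. Proof. by rewrite mxE. Qed.

Lemma sum_rV2 (g : 'rV[T]_2 -> V) :
  \sum_r g r = \sum_(b : T) \sum_(a : T) g (row2 a b).
Proof.
rewrite pair_big /= (reindex (fun u : T * T => row2 u.2 u.1)) //=.
exists (fun r : 'rV[T]_2 => (r 0 1, r 0 0)) => [[b a] _ | r _] /=.
  by rewrite row2_0 row2_1.
by apply/rowP => -[[|[|//]] i_lt2]; rewrite mxE; congr (r 0 _); apply: val_inj.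
Qed.

End RowSums.

Section DotProduct.
Variable p : nat.

Lemma dotp_row_mx m k (b x : 'rV['F_p]_m) (c r : 'rV['F_p]_k) :
  dotp (row_mx b c) (row_mx x r) = dotp b x + dotp c r.
Proof.
by rewrite /dotp big_split_ord; congr (_ + _); apply: eq_bigr => i _;
  rewrite ?row_mxEl ?row_mxEr.
Qed.

Lemma dotp_rV2 (b r : 'rV['F_p]_2) : dotp b r = b 0 0 * r 0 0 + b 0 1 * r 0 1.
Proof.
rewrite /dotp big_ord_recr big_ord1.
by congr (_ * _ + _ * _); congr (_ 0 _); apply: val_inj.
Qed.

End DotProduct.

Section WalshGlue.
Variables (p : nat) (n : nat).
Hypothesis p_pr : prime p.

Definition glue (f : 'F_p -> 'rV['F_p]_n -> 'F_p) (z : 'rV['F_p]_(n + 2)) : 'F_p :=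
  f ((rsubmx z) 0 1) (lsubmx z) + (rsubmx z) 0 0 * (rsubmx z) 0 1.

Lemma walsh_glue f b c :
  walsh (glue f) (row_mx b c)
  = p%:R * addchar (- (c 0 0 * c 0 1)) * walsh (f (c 0 0)) b.
Proof.
rewrite walshE sum_row_mx sum_rV2.
transitivity (\sum_(y : 'F_p) (addchar (- (c 0 1 * y)) * walsh (f y) b)
                 * \sum_(s : 'F_p) addchar (s * (y - c 0 0))).
  apply: eq_bigr => y _; rewrite mulr_sumr; apply: eq_bigr => s _.
  rewrite walshE mulr_sumr mulr_suml; apply: eq_bigr => x _.
  rewrite -!addcharD // /glue row_mxKl row_mxKr dotp_row_mx dotp_rV2 !row2_0 !row2_1.
  by congr (@addchar p); ring.
under eq_bigr do rewrite sum_addcharM // subr_eq0.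
rewrite (bigD1 (c 0 0)) //= eqxx big1 => [|y /negbTE-> //]; last by rewrite mulr0.
by rewrite addr0 mulrC mulrA [c 0 1 * _]mulrC.
Qed.

Lemma norm_walsh_glue f b c :
  `|walsh (glue f) (row_mx b c)| = p%:R * `|walsh (f (c 0 0)) b|.
Proof. by rewrite walsh_glue normrM normrM norm_addchar // mulr1 normr_nat. Qed.

End WalshGlue.

Lemma sqrtC_exprD2 (C : numClosedFieldType) (a : C) N :
  0 <= a -> sqrtC (a ^+ (N + 2)) = a * sqrtC (a ^+ N).
Proof.
move=> a_ge0; rewrite exprD sqrtCM ?nnegrE ?exprn_ge0 //.
by rewrite mulrC sqrCK.
Qed.

Theorem proposition1 (p : nat) (hp : prime p) (n : nat) (hn : (0 < n)%N)
  (f : 'F_p -> 'rV['F_p]_n -> 'F_p) :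
  bent (fun z : 'rV['F_p]_(n + 2) =>
          f ((rsubmx z) 0 1) (lsubmx z) + (rsubmx z) 0 0 * (rsubmx z) 0 1)
  <-> (forall j : 'F_p, bent (f j)).
Proof.
have p_neq0 : (p%:R : algC) != 0 by rewrite pnatr_eq0 -lt0n prime_gt0.
split => [bent_F j b | bent_f bc].
- have := bent_F (row_mx b (row2 j 0)).
  by rewrite norm_walsh_glue // row2_0 sqrtC_exprD2 ?ler0n // => /(mulfI p_neq0).
- by rewrite -[bc]hsubmxK norm_walsh_glue // bent_f sqrtC_exprD2 ?ler0n.
Qed.
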